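(* Let $(X,\Sigma)$ be a measurable space and $p$ a transition function on it with associated operator $A$ on $ba(X,\Sigma)$. Suppose the Markov chain has a singular cycle of sets of states $S=\{D_1,\dots,D_m\}$. Then $A$ has a singular cycle of finitely additive measures $K=\{\mu_1,\dots,\mu_m\}\subset S_{ba}$ such that $\mu_i(D_j)=1$ if $i=j$ and $\mu_i(D_j)=0$ if $i\ne j$.
   Context: $X$ is an arbitrary infinite set and $\Sigma$ a $\sigma$-algebra of subsets of $X$ containing all one-point sets. $ba(X,\Sigma)$ denotes the space of bounded finitely additive real-valued measures on $\Sigma$, and $S_{ba}=\{\mu\in ba(X,\Sigma):\mu\ge0,\ \mu(X)=1\}$. A transition function is a map $p(x,E)$ with $0\le p(x,E)\le1$, $p(x,X)=1$, $p(\cdot,E)$ bounded $\Sigma$-measurable for every $E\in\Sigma$, and $p(x,\cdot)$ countably additive for every $x\in X$. The Markov operator is $A\mu(E)=\int_X p(x,E)\,\mu(dx)$. A cycle of measures of $A$ is a finite numbered set $\{\mu_1,\dots,\mu_m\}$ of pairwise different positive finitely additive measures with $A\mu_i=\mu_{i+1}$ ($1\le i\le m-1$), $A\mu_m=\mu_1$; it is singular if its measures are pairwise singular, where positive $\mu,\nu$ are singular if there are disjoint $D,D'\in\Sigma$ with $\mu(D)=\mu(X)$, $\nu(D')=\nu(X)$. A cycle of sets of states is a system of pairwise distinct sets $D_1,\dots,D_m\in\Sigma$ with $p(x,D_{i+1})=1$ for all $x\in D_i$ ($1\le i\le m-1$) and $p(x,D_1)=1$ for all $x\in D_m$; it is singular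 if $D_i\cap D_j=\emptyset$ for $i\ne j$. *)

From mathcomp Require Import all_boot all_order all_algebra.
From mathcomp Require Import all_classical all_reals all_analysis.
Import Order.TTheory GRing.Theory Num.Theory numFieldNormedType.Exports.
Local Open Scope classical_set_scope.
Local Open Scope ring_scope.

Section Defs.
Context {d : measure_display} {T : measurableType d} {R : realType}.

(* finitely additive set functions on the sigma-algebra of T
   (only values on measurable sets matter) *)
Definition fin_additive (mu : set T -> R) : Prop :=
  forall A B, measurable A -> measurable B -> A `&` B = set0 ->
    mu (A `|` B) = mu A + mu B.

Definition bounded_sf (mu : set T -> R) : Prop :=
  exists M : R, forall A, measurable A -> `|mu A| <= M.

Definition ba_measure (mu : set T -> R) : Prop :=
  fin_additive mu /\ bounded_sf mu.

Definition positive_ba (mu : set T -> R) : Prop :=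
  ba_measure mu /\ (forall A, measurable A -> 0 <= mu A).

Definition S_ba (mu : set T -> R) : Prop :=
  positive_ba mu /\ mu setT = 1.

Definition meq (mu nu : set T -> R) : Prop :=
  forall E, measurable E -> mu E = nu E.

Definition singular_ba (mu nu : set T -> R) : Prop :=
  exists D D' : set T, [/\ measurable D, measurable D', D `&` D' = set0,
    mu D = mu setT & nu D' = nu setT].

Definition transition_function (p : T -> set T -> R) : Prop :=
  [/\ (forall x E, measurable E -> 0 <= p x E <= 1),
      (forall x, p x setT = 1),
      (forall E, measurable E -> measurable_fun setT (fun x => p x E))
    & (forall x (F : nat -> set T), (forall n, measurable (F n)) ->
        trivIset setT F ->
        (fun n => \sum_(0 <= k < n) p x (F k)) @ \oo --> p x (\bigcup_n F n))].

Definition fa_integral (mu : set T -> R) (f : T -> R) : R :=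
  sup [set r | exists (n : nat) (P : 'I_n -> set T),
    [/\ (forall i, measurable (P i)),
        (forall i j, i != j -> P i `&` P j = set0),
        (forall x, exists i, P i x)
      & r = \sum_(i < n) inf (f @` P i) * mu (P i)]].

Definition markov_op (p : T -> set T -> R) (mu : set T -> R) : set T -> R :=
  fun E => fa_integral mu (fun x => p x E).

(* cycle of measures mu_0, ..., mu_{m-1} (indices shifted by one) *)
Definition cycle_measures (p : T -> set T -> R) (m : nat)
    (mu : nat -> set T -> R) : Prop :=
  [/\ (forall i, (i < m)%N -> positive_ba (mu i)),
      (forall i j, (i < m)%N -> (j < m)%N -> i != j -> ~ meq (mu i) (mu j))
    & (forall i, (i < m)%N -> meq (markov_op p (mu i)) (mu (i.+1 %% m)%N))].

Definition singular_cycle_measures (p : T -> set T -> R) (m : nat)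
    (mu : nat -> set T -> R) : Prop :=
  cycle_measures p m mu /\
  (forall i j, (i < m)%N -> (j < m)%N -> i != j -> singular_ba (mu i) (mu j)).

Definition cycle_sets (p : T -> set T -> R) (m : nat) (D : nat -> set T) : Prop :=
  [/\ (forall i, (i < m)%N -> measurable (D i) /\ D i !=set0),
      (forall i j, (i < m)%N -> (j < m)%N -> i != j -> D i <> D j)
    & (forall i x, (i < m)%N -> D i x -> p x (D (i.+1 %% m)%N) = 1)].

Definition singular_cycle_sets (p : T -> set T -> R) (m : nat) (D : nat -> set T) : Prop :=
  cycle_sets p m D /\
  (forall i j, (i < m)%N -> (j < m)%N -> i != j -> D i `&` D j = set0).

End Defs.

(* Let delta be the point mass at some x0 in D_0.  Its iterates nu_n = A^n delta
   are finitely additive probabilities carried by D_(n mod m).  Averaging them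
   along each residue class with a Banach limit L,
     mu_i(E) = L (j |-> nu_(jm+i)(E)),
   gives finitely additive probabilities with mu_i(D_i) = 1.  The integral of a
   measurable f : X -> [0,1] against a finitely additive probability lies within
   1/N of the sum of k/N * mu(k/N <= f < (k+1)/N), which is linear in mu; hence
   integration commutes with L and A mu_i = mu_(i+1), while the shift invariance
   of L gives A mu_(m-1) = mu_0.  As the D_i are disjoint, mu_i(D_j) = 0 for
   i <> j, so the mu_i are distinct and pairwise singular.  A Banach limit is
   the limit of the Cesaro means along an ultrafilter refining the cofinite
   filter. *)

From mathcomp Require Import all_boot all_order all_algebra.
From mathcomp Require Import all_classical all_reals all_analysis.
From mathcomp Require Import lra.
Import Order.TTheory GRing.Theory Num.Theory numFieldNormedType.Exports.
Local Open Scope classical_set_scope.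
Local Open Scope ring_scope.

(** * Means and Banach limits *)

Section Means.
Context {R : realType}.
Implicit Types (u v : nat -> R) (c M : R) (L : (nat -> R) -> R).

Definition bounded_seq u := exists M, forall n, `|u n| <= M.

Definition mean L := [/\
  forall u v, bounded_seq u -> bounded_seq v ->
    L (fun n => u n + v n) = L u + L v,
  forall c u, bounded_seq u -> L (fun n => c * u n) = c * L u,
  forall u v, bounded_seq u -> bounded_seq v -> (forall n, u n <= v n) ->
    L u <= L v
  & L (fun=> 1) = 1].

Definition banach_limit L :=
  mean L /\ forall u, bounded_seq u -> L (fun n => u n.+1) = L u.

Lemma bounded_seq_cst c : bounded_seq (fun=> c).
Proof. by exists `|c|. Qed.

Lemma bounded_seqD u v :
  bounded_seq u -> bounded_seq v -> bounded_seq (fun n => u n + v n).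
Proof.
move=> [M uM] [K vK]; exists (M + K) => n.
by rewrite (le_trans (ler_normD _ _)) ?lerD.
Qed.

Lemma bounded_seqZ c u : bounded_seq u -> bounded_seq (fun n => c * u n).
Proof. by move=> [M uM]; exists (`|c| * M) => n; rewrite normrM ler_wpM2l. Qed.

Lemma bounded_seq_itv u a b : (forall n, a <= u n <= b) -> bounded_seq u.
Proof.
move=> uab; exists (`|a| + `|b|) => n; have /andP[ua ub] := uab n.
have := ler_norm b; have := ler_norm (- a); have := normr_ge0 a; have := normr_ge0 b.
rewrite normrN => ? ? ? ?.
by rewrite ler_norml; apply/andP; split; lra.
Qed.

Section MeanTheory.
Context {L : (nat -> R) -> R} (meanL : mean L).

Lemma meanD u v : bounded_seq u -> bounded_seq v ->
  L (fun n => u n + v n) = L u + L v.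
Proof. by case: meanL => + _ _ _; apply. Qed.

Lemma meanZ c u : bounded_seq u -> L (fun n => c * u n) = c * L u.
Proof. by case: meanL => _ + _ _; apply. Qed.

Lemma mean_le u v : bounded_seq u -> bounded_seq v -> (forall n, u n <= v n) ->
  L u <= L v.
Proof. by case: meanL => _ _ + _; apply. Qed.

Lemma mean_cst c : L (fun=> c) = c.
Proof.
case: meanL => _ LZ _ L1.
by have := LZ c (fun=> 1) (bounded_seq_cst 1); rewrite L1 mulr1.
Qed.

Lemma meanB u v : bounded_seq u -> bounded_seq v ->
  L (fun n => u n - v n) = L u - L v.
Proof.
move=> bu bv; have bNv : bounded_seq (fun n => -1 * v n) by exact: bounded_seqZ.
have -> : (fun n => u n - v n) = (fun n => u n + -1 * v n).
  by apply/funext => n; rewrite mulN1r.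
by rewrite meanD // meanZ // mulN1r.
Qed.

Lemma mean_sum (I : Type) (r : seq I) (F : I -> nat -> R) :
  (forall i, bounded_seq (F i)) ->
  L (fun n => \sum_(i <- r) F i n) = \sum_(i <- r) L (F i).
Proof.
move=> bF; elim: r => [|i r IH].
  by under eq_fun do rewrite big_nil; rewrite big_nil mean_cst.
have bS s : bounded_seq (fun n => \sum_(j <- s) F j n).
  elim: s => [|j s IHs].
    by under eq_fun do rewrite big_nil; exact: bounded_seq_cst.
  by under eq_fun do rewrite big_cons; exact: bounded_seqD.
by under eq_fun do rewrite big_cons; rewrite meanD // IH big_cons.
Qed.

Lemma mean_norm_le u M : (forall n, `|u n| <= M) -> `|L u| <= M.
Proof.
move=> uM; have bu : bounded_seq u by exists M.
have /all_and2[uMl uMr] n : - M <= u n /\ u n <= M by apply/andP; rewrite -ler_norml.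
rewrite ler_norml; apply/andP; split.
  by rewrite -{1}(mean_cst (- M)) mean_le //; exact: bounded_seq_cst.
by rewrite -(mean_cst M) mean_le //; exact: bounded_seq_cst.
Qed.

End MeanTheory.

Lemma mean_comp {Phi : nat -> (nat -> R) -> R} {Psi : (nat -> R) -> R} :
  (forall N, mean (Phi N)) -> mean Psi -> mean (fun u => Psi (fun N => Phi N u)).
Proof.
move=> meanPhi meanPsi.
have bPhi u : bounded_seq u -> bounded_seq (fun N => Phi N u).
  by move=> [M uM]; exists M => N; exact: mean_norm_le.
split.
- move=> u v bu bv.
  have -> : (fun N => Phi N (fun n => u n + v n)) = (fun N => Phi N u + Phi N v).
    by apply/funext => N; exact: meanD.
  by rewrite meanD //; exact: bPhi.
- move=> c u bu.
  have -> : (fun N => Phi N (fun n => c * u n)) = (fun N => c * Phi N u).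
    by apply/funext => N; exact: meanZ.
  by rewrite meanZ //; exact: bPhi.
- move=> u v bu bv uv; apply: mean_le => // [||N]; [exact: bPhi..|exact: mean_le].
- have -> : (fun N => Phi N (fun=> 1)) = (fun=> 1).
    by apply/funext => N; exact: mean_cst.
  exact: mean_cst.
Qed.

Definition cesaro_mean N u := N.+1%:R^-1 * \sum_(j < N.+1) u j.

Lemma mean_cesaro N : mean (cesaro_mean N).
Proof.
have N1 : N.+1%:R != 0 :> R by rewrite pnatr_eq0.
split.
- by move=> u v _ _; rewrite /cesaro_mean big_split mulrDr.
- by move=> c u _; rewrite /cesaro_mean -mulr_sumr mulrCA.
- move=> u v _ _ uv; rewrite ler_wpM2l ?invr_ge0 //; exact: ler_sum.
- by rewrite /cesaro_mean sumr_const card_ord -[1 *+ _]/(N.+1%:R) mulVf.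
Qed.

Lemma cesaro_mean_shift N u :
  cesaro_mean N (fun n => u n.+1) - cesaro_mean N u = N.+1%:R^-1 * (u N.+1 - u 0%N).
Proof.
by rewrite /cesaro_mean -mulrBr -sumrB -(big_mkord xpredT (fun j => u j.+1 - u j))
  telescope_sumr.
Qed.

End Means.

Section UltraLimit.
Context {R : realType} {U : set_system nat}.
Hypothesis UU : UltraFilter U.

Lemma ultra_cvg_bounded (u : nat -> R) : bounded_seq u -> u @ U --> lim (u @ U).
Proof.
move=> [M uM]; have [|l [_ cl]] := @segment_compact R (- M) M (u @ U) _.
  by apply: (@filterE _ U) => n; rewrite /= in_itv /= -ler_norml.
apply: (cvgP l) => B lB /=.
have [//|UnB] := in_ultra_setVsetC (u @^-1` B) UU.
by have [z []] := cl (~` B) B UnB lB.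
Qed.

Lemma mean_ultralim : mean (fun u : nat -> R => lim (u @ U)).
Proof.
split.
- move=> u v bu bv; apply: cvg_lim => //.
  by apply: cvgD; exact: ultra_cvg_bounded.
- move=> c u bu; apply: cvg_lim => //.
  by apply: cvgM; [exact: cvg_cst | exact: ultra_cvg_bounded].
- move=> u v bu bv uv.
  apply: ler_lim; [exact: cvgP _ (ultra_cvg_bounded _ bu)|
                   exact: cvgP _ (ultra_cvg_bounded _ bv)| exact: filterE].
- exact: lim_cst.
Qed.

Lemma ultralim_cvg (u : nat -> R) l : \oo `<=` U -> u @ \oo --> l ->
  lim (u @ U) = l.
Proof.
by move=> cofinU ul; apply: cvg_lim => // B /ul; exact: cofinU.
Qed.

End UltraLimit.

Lemma cesaro_mean_shift_cvg0 (R : realType) (u : nat -> R) : bounded_seq u ->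
  cesaro_mean N (fun n => u n.+1) - cesaro_mean N u @[N --> \oo] --> 0.
Proof.
move=> [M uM]; under eq_fun do rewrite cesaro_mean_shift.
have h0 N : 0 <= N.+1%:R^-1 :> R by rewrite invr_ge0.
apply: (@squeeze_cvgr _ _ _ _ (fun N => - (2 * M * harmonic N))
                              (fun N => 2 * M * harmonic N)).
- apply: filterE => N; rewrite -ler_norml normrM ger0_norm // mulrC ler_wpM2r //.
  by rewrite (le_trans (ler_normB _ _)) // mulr2n mulrDl mul1r lerD.
- rewrite -oppr0 -(mulr0 (2 * M)); apply: cvgN.
  by apply: cvgM; [exact: cvg_cst | exact: cvg_harmonic].
- by rewrite -(mulr0 (2 * M)); apply: cvgM; [exact: cvg_cst | exact: cvg_harmonic].
Qed.

Lemma banach_limit_exists (R : realType) :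
  exists L : (nat -> R) -> R, banach_limit L.
Proof.
have [U [UU cofinU]] :=
  ultraFilterLemma (F := \oo : set_system nat) eventually_filter.
have meanL := mean_comp (@mean_cesaro R) (mean_ultralim UU).
exists (fun u => lim ((fun N => cesaro_mean N u) @ U)); split => // u bu.
have bounded_cesaro (v : nat -> R) : bounded_seq v -> bounded_seq (cesaro_mean^~ v).
  by move=> [M vM]; exists M => N; exact: mean_norm_le (mean_cesaro N) _ _ vM.
have bus : bounded_seq (fun n => u n.+1) by case: bu => M uM; exists M.
apply/eqP; rewrite -subr_eq0 -(meanB (mean_ultralim UU)); try exact: bounded_cesaro.
by apply/eqP/(ultralim_cvg UU _ _ cofinU); exact: cesaro_mean_shift_cvg0.
Qed.

(** * Integration against finitely additive probabilities *)

Lemma eq_approx {R : realType} (a b c : R) :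
  (forall N, (0 < N)%N -> a <= b + c / N%:R /\ b <= a + c / N%:R) -> a = b.
Proof.
have le_approx x y : (forall N, (0 < N)%N -> x <= y + c / N%:R) -> x <= y.
  move=> xy; apply/ler_addgt0Pr => e e0.
  pose N := (Num.truncn (c / e)).+1.
  have cN : c / N%:R <= e.
    rewrite ler_pdivrMr ?ltr0n // mulrC -ler_pdivrMr //.
    exact/ltW/truncnS_gt.
  by rewrite (le_trans (xy N _)) ?lerD2l.
move=> ab; apply/le_anti/andP; split; apply: le_approx => N /ab[] //.
Qed.

Section FaIntegral.
Context {d : measure_display} {T : measurableType d} {R : realType}.
Implicit Types (mu : set T -> R) (f g : T -> R).

Definition fa_prob mu :=
  [/\ fin_additive mu, forall A, measurable A -> 0 <= mu A & mu setT = 1].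

Definition measurable_partition {I : finType} (Q : I -> set T) :=
  [/\ forall i, measurable (Q i), forall i j, i != j -> Q i `&` Q j = set0
    & forall x, exists i, Q i x].

Lemma measurable_partition_setT : measurable_partition (fun _ : 'I_1 => setT).
Proof. by split => // [i j|x]; [rewrite !ord1 eqxx | exists ord0]. Qed.

Lemma measurable_partition_setC A : measurable A ->
  measurable_partition (fun b : bool => if b then A else ~` A).
Proof.
move=> mA; split => [[]|[] []|x] //=; rewrite ?setICr ?setICl //.
  exact: measurableC.
by have [Ax|nAx] := pselect (A x); [exists true | exists false].
Qed.

Lemma measurable_partitionI {I J : finType} {P : I -> set T} {Q : J -> set T} :
  measurable_partition P -> measurable_partition Q ->
  measurable_partition (fun ij : I * J => P ij.1 `&` Q ij.2).
Proof.
move=> [mP dP cP] [mQ dQ cQ]; split.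
- by move=> ij; apply: measurableI.
- move=> [i1 j1] [i2 j2] /=; rewrite xpair_eqE negb_and => /orP[/dP|/dQ] d12.
    by rewrite setIACA d12 set0I.
  by rewrite setIACA d12 setI0.
- by move=> x; have [i Pix] := cP x; have [j Qjx] := cQ x; exists (i, j).
Qed.

Lemma fa_prob_indic x0 : fa_prob (fun A => \1_A x0 : R).
Proof.
split => [A B _ _ AB|A _|]; rewrite ?indicE ?in_setT //.
rewrite in_setU; have [Ax|_] := boolP (x0 \in A); last by rewrite add0r.
have [Bx|_] := boolP (x0 \in B); last by rewrite addr0.
by move: AB; rewrite -subset0 => /(_ x0); case; split; exact/set_mem.
Qed.

(* The levels run over k = 0 .. N, so that the value f x = 1 lies in the top one. *)
Definition level_set f N (k : 'I_N.+1) :=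
  [set x | k%:R / N%:R <= f x < k.+1%:R / N%:R].

Lemma level_set_bounds {f N k x} : level_set f N k x ->
  k%:R / N%:R <= f x <= k%:R / N%:R + N%:R^-1.
Proof. by move=> /andP[-> /ltW]; rewrite -natr1 mulrDl mul1r. Qed.

Lemma measurable_partition_level_set f N : (0 < N)%N ->
  measurable_fun setT f -> (forall x, 0 <= f x <= 1) ->
  measurable_partition (level_set f N).
Proof.
move=> N0 mf f01; have N0' : (0 : R) < N%:R by rewrite ltr0n.
split.
- move=> k; rewrite -[level_set _ _ _]setTI.
  by have := mf measurableT _ (measurable_itv `[(k%:R / N%:R), (k.+1%:R / N%:R)[);
    congr measurable; apply/seteqP; split => x /=; rewrite in_itv.
- move=> i j; apply: contraNeq => /set0P[x [/andP[ai bi] /andP[aj bj]]].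
  have ij : i%:R / N%:R < j.+1%:R / N%:R :> R by apply: le_lt_trans bj.
  have ji : j%:R / N%:R < i.+1%:R / N%:R :> R by apply: le_lt_trans bi.
  rewrite !ltr_pM2r ?invr_gt0 // !ltr_nat !ltnS in ij ji.
  by apply/eqP/val_inj/eqP; rewrite eqn_leq ij ji.
- move=> x; have /andP[f0 f1] := f01 x.
  have /andP[tl tu] := truncn_itv (mulr_ge0 (ltW N0') f0).
  have kN : (Num.truncn (N%:R * f x) < N.+1)%N.
    by rewrite ltnS -(ler_nat R) (le_trans tl) // ler_piMr.
  exists (Ordinal kN); rewrite /level_set /= ler_pdivrMr // ltr_pdivlMr //.
  by rewrite ![_ * N%:R]mulrC tl tu.
Qed.

Section FaProb.
Context {mu} (pmu : fa_prob mu).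

Lemma fa_prob0 : mu set0 = 0.
Proof.
case: pmu => addmu _ _; have := addmu set0 set0 measurable0 measurable0 (setI0 _).
by rewrite setU0 => /eqP; rewrite -subr_eq subrr eq_sym => /eqP.
Qed.

Lemma fa_prob_ge0 A : measurable A -> 0 <= mu A.
Proof. by case: pmu => _ + _; apply. Qed.

Lemma fa_prob_le1 A : measurable A -> mu A <= 1.
Proof.
move=> mA; case: pmu => addmu _ <-.
rewrite -(setUv A) addmu ?setICr //; last exact: measurableC.
by rewrite lerDl fa_prob_ge0 //; exact: measurableC.
Qed.

Lemma fa_prob_disjoint_carrier A B : measurable A -> measurable B ->
  A `&` B = set0 -> mu A = 1 -> mu B = 0.
Proof.
move=> mA mB AB muA1; have [addmu _ _] := pmu.
have := fa_prob_le1 _ (measurableU _ _ mA mB); rewrite addmu // muA1.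
by have := fa_prob_ge0 _ mB; lra.
Qed.

Lemma fa_prob_S_ba : S_ba mu.
Proof.
case: pmu => addmu mu_ge0 muT; split => //; split => //; split => //.
by exists 1 => A mA; rewrite ger0_norm ?fa_prob_ge0 ?fa_prob_le1.
Qed.

Lemma fa_prob_bigsetU {I : finType} (r : seq I) (B : I -> set T) :
  uniq r -> (forall i, measurable (B i)) ->
  (forall i j, i != j -> B i `&` B j = set0) ->
  mu (\big[setU/set0]_(i <- r) B i) = \sum_(i <- r) mu (B i).
Proof.
move=> + mB dB; elim: r => [|i r IH]; first by rewrite !big_nil fa_prob0.
move=> /= /andP[ir ur]; case: pmu => addmu _ _.
rewrite !big_cons addmu ?IH //; first exact: bigsetU_measurable.
rewrite -bigcup_seq; apply/seteqP; split => // x [Bix [j /= rj Bjx]].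
have ij : i != j by apply: contraNneq ir => ->.
by have := dB _ _ ij; rewrite -subset0 => /(_ x (conj Bix Bjx)).
Qed.

Lemma fa_prob_partition {I : finType} {Q : I -> set T} A :
  measurable_partition Q -> measurable A -> mu A = \sum_i mu (A `&` Q i).
Proof.
move=> [mQ dQ cQ] mA.
have -> : mu A = mu (\big[setU/set0]_(i <- index_enum I) (A `&` Q i)).
  congr mu; rewrite -bigcup_seq; apply/seteqP; split => [x Ax|x [i _ []//]].
  by have [i Qix] := cQ x; exists i => //=; rewrite mem_index_enum.
rewrite fa_prob_bigsetU ?index_enum_uniq // => [i|i j ij]; first exact: measurableI.
by rewrite setIACA dQ // setI0.
Qed.

Lemma fa_prob_partition_sum {I : finType} {Q : I -> set T} :
  measurable_partition Q -> \sum_i mu (Q i) = 1.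
Proof.
move=> pQ; case: pmu => _ _ <-; rewrite (fa_prob_partition setT pQ) //.
by apply: eq_bigr => i _; rewrite setTI.
Qed.

Lemma lower_sum_le f {I : finType} (b : I -> R) {n} {P : 'I_n -> set T}
    {Q : I -> set T} :
  (forall x, 0 <= f x) -> measurable_partition P -> measurable_partition Q ->
  (forall i x, Q i x -> f x <= b i) ->
  \sum_(j < n) inf (f @` P j) * mu (P j) <= \sum_i b i * mu (Q i).
Proof.
move=> f0 pP pQ fb; have [mP _ _] := pP; have [mQ _ _] := pQ.
under eq_bigr do rewrite (fa_prob_partition _ pQ) // mulr_sumr.
rewrite exchange_big /=; apply: ler_sum => i _.
rewrite (fa_prob_partition (Q i) pP) // mulr_sumr; apply: ler_sum => j _.
rewrite [Q i `&` _]setIC; have [->|/set0P[x [Pjx Qix]]] := eqVneq (P j `&` Q i) set0.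
  by rewrite fa_prob0 !mulr0.
apply: ler_wpM2r; first by apply: fa_prob_ge0; exact: measurableI.
apply: le_trans (fb i x Qix); apply: ge_inf; last by exists x.
by exists 0 => _ [y _ <-].
Qed.

Lemma fa_integral_le {I : finType} {Q : I -> set T} b f :
  (forall x, 0 <= f x) -> measurable_partition Q ->
  (forall i x, Q i x -> f x <= b i) ->
  fa_integral mu f <= \sum_i b i * mu (Q i).
Proof.
move=> f0 pQ fb; apply: ge_sup.
  have [mT dT cT] := measurable_partition_setT.
  by exists (\sum_(i < 1) inf (f @` setT) * mu setT), 1%N, (fun=> setT).
by move=> _ [n [P [mP dP cP ->]]]; exact: lower_sum_le.
Qed.

Lemma fa_integral_ge {I : finType} {Q : I -> set T} a f :
  (forall x, 0 <= f x <= 1) -> measurable_partition Q ->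
  (forall i x, Q i x -> a i <= f x) ->
  \sum_i a i * mu (Q i) <= fa_integral mu f.
Proof.
move=> f01 pQ af; have [mQ dQ cQ] := pQ.
have /all_and2[f0 f1] x : 0 <= f x /\ f x <= 1 by apply/andP.
apply: le_trans (_ : \sum_i inf (f @` Q i) * mu (Q i) <= _).
  apply: ler_sum => i _; have [->|/set0P[x Qix]] := eqVneq (Q i) set0.
    by rewrite fa_prob0 !mulr0.
  rewrite ler_wpM2r ?fa_prob_ge0 //; apply: lb_le_inf; first by exists (f x), x.
  by move=> _ [y Qiy <-]; exact: af.
apply: ub_le_sup.
  exists 1 => _ [n [P [mP dP cP ->]]].
  have := lower_sum_le f (fun=> 1) f0 (And3 mP dP cP) measurable_partition_setT.
  by rewrite big_ord1 mul1r; case: pmu => _ _ ->; apply => _ x _; exact: f1.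
exists #|I|, (Q \o enum_val); split => [i|i j ij|x|]; first exact: mQ.
- by apply: dQ; rewrite (inj_eq enum_val_inj).
- by have [i Qix] := cQ x; exists (enum_rank i); rewrite /= enum_rankK.
- by rewrite big_enum_val.
Qed.

Lemma fa_integral_approx {I : finType} {Q : I -> set T} a e f :
  (forall x, 0 <= f x <= 1) -> measurable_partition Q ->
  (forall i x, Q i x -> a i <= f x <= a i + e) ->
  \sum_i a i * mu (Q i) <= fa_integral mu f <= \sum_i a i * mu (Q i) + e.
Proof.
move=> f01 pQ aef; rewrite fa_integral_ge // => [|i x /aef /andP[] //].
rewrite (le_trans (fa_integral_le (fun i => a i + e) f _ pQ _)) //.
- by move=> x; case/andP: (f01 x).
- by move=> i x /aef /andP[].
- under eq_bigr do rewrite mulrDl.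
  by rewrite big_split /= -mulr_sumr fa_prob_partition_sum // mulr1.
Qed.

Lemma fa_integral01 f : (forall x, 0 <= f x <= 1) -> 0 <= fa_integral mu f <= 1.
Proof.
move=> f01; have := fa_integral_approx (fun=> 0) 1 f f01 measurable_partition_setT.
rewrite big1 ?add0r => [|i _]; last by rewrite mul0r.
by apply => _ x _; exact: f01.
Qed.

Lemma fa_integral_cst c : 0 <= c <= 1 -> fa_integral mu (fun=> c) = c.
Proof.
move=> c01.
have := fa_integral_approx (fun=> c) 0 _ (fun=> c01) measurable_partition_setT.
rewrite big_ord1 !addr0; case: pmu => _ _ ->; rewrite mulr1 => cIc.
by apply/eqP; rewrite eq_le andbC cIc // => _ x _; rewrite lexx.
Qed.

Lemma fa_integralD f g : measurable_fun setT f -> measurable_fun setT g ->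
  (forall x, 0 <= f x) -> (forall x, 0 <= g x) -> (forall x, f x + g x <= 1) ->
  fa_integral mu (fun x => f x + g x) = fa_integral mu f + fa_integral mu g.
Proof.
move=> mf mg f0 g0 fg1.
have f01 x : 0 <= f x <= 1 by rewrite f0 /=; have := g0 x; have := fg1 x; lra.
have g01 x : 0 <= g x <= 1 by rewrite g0 /=; have := f0 x; have := fg1 x; lra.
have fg01 x : 0 <= f x + g x <= 1 by rewrite fg1 addr_ge0.
apply: (@eq_approx _ _ _ 2) => N N0.
have pF := measurable_partition_level_set f N N0 mf f01.
have pG := measurable_partition_level_set g N N0 mg g01.
have pQ := measurable_partitionI pF pG.
pose a (k : 'I_N.+1) := k%:R / N%:R : R.
have /andP[If1 If2] := fa_integral_approx (fun ij => a ij.1) N%:R^-1 f f01 pQ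
  (fun ij x Qx => level_set_bounds Qx.1).
have /andP[Ig1 Ig2] := fa_integral_approx (fun ij => a ij.2) N%:R^-1 g g01 pQ
  (fun ij x Qx => level_set_bounds Qx.2).
have := fa_integral_approx (fun ij => a ij.1 + a ij.2) (N%:R^-1 + N%:R^-1) _
  fg01 pQ.
under eq_bigr do rewrite mulrDl; rewrite big_split /=.
case/(_ _)/andP => [ij x [/level_set_bounds Fx /level_set_bounds Gx]|Ifg1 Ifg2].
  by move: Fx Gx; rewrite /a => /andP[? ?] /andP[? ?]; apply/andP; split; lra.
by split; lra.
Qed.

End FaProb.

Lemma fa_prob_mean {L} {nu : nat -> set T -> R} : mean L ->
  (forall n, fa_prob (nu n)) -> fa_prob (fun E => L (fun n => nu n E)).
Proof.
move=> meanL pnu.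
have bnu E : measurable E -> bounded_seq (fun n => nu n E).
  by move=> mE; apply: (bounded_seq_itv _ 0 1) => n;
    rewrite fa_prob_ge0 ?fa_prob_le1.
split.
- move=> A B /[dup] mA /bnu bA /[dup] mB /bnu bB AB /=; rewrite -meanD //.
  by congr L; apply/funext => n; case: (pnu n) => + _ _; apply.
- move=> A mA /=; rewrite -(mean_cst meanL 0).
  apply: (mean_le meanL) => [||n]; first exact: bounded_seq_cst.
  - exact: bnu mA.
  - exact: fa_prob_ge0.
- by rewrite /= -(mean_cst meanL 1); congr L; apply/funext => n; case: (pnu n).
Qed.

Lemma fa_integral_mean {L} {nu : nat -> set T -> R} f : mean L ->
  (forall n, fa_prob (nu n)) -> measurable_fun setT f -> (forall x, 0 <= f x <= 1) ->
  fa_integral (fun E => L (fun n => nu n E)) f = L (fun n => fa_integral (nu n) f).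
Proof.
move=> meanL pnu mf f01; apply: (@eq_approx _ _ _ 1) => N N0.
have pQ := measurable_partition_level_set f N N0 mf f01; have [mQ _ _] := pQ.
pose a (k : 'I_N.+1) := k%:R / N%:R : R.
pose S n := \sum_k a k * nu n (level_set f N k).
have approx n := fa_integral_approx (pnu n) a N%:R^-1 f f01 pQ
  (fun k x => level_set_bounds).
have /andP[IL1 IL2] := fa_integral_approx (fa_prob_mean meanL pnu) a N%:R^-1 f f01 pQ
  (fun k x => level_set_bounds).
have bnu k : bounded_seq (fun n => nu n (level_set f N k)).
  by apply: (bounded_seq_itv _ 0 1) => n;
    rewrite fa_prob_ge0 ?fa_prob_le1.
have bI : bounded_seq (fun n => fa_integral (nu n) f).
  by apply: (bounded_seq_itv _ 0 1) => n; exact: fa_integral01.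
have bS : bounded_seq S.
  apply: (bounded_seq_itv _ (- N%:R^-1) 1) => n.
  have /andP[I0 I1] := fa_integral01 (pnu n) f f01.
  by have /andP[S1 S2] := approx n; rewrite /S; apply/andP; split; lra.
have LS : \sum_k a k * L (fun n => nu n (level_set f N k)) = L S.
  rewrite mean_sum // => [|k]; last exact: bounded_seqZ.
  by apply: eq_bigr => k _; rewrite meanZ.
have LS1 : L S <= L (fun n => fa_integral (nu n) f).
  by apply: mean_le => // n; case/andP: (approx n).
have LS2 : L (fun n => fa_integral (nu n) f) <= L S + N%:R^-1.
  rewrite -[X in _ + X](mean_cst meanL) -meanD //; last exact: bounded_seq_cst.
  apply: mean_le => // [|n]; first by apply: bounded_seqD => //; exact: bounded_seq_cst.
  by case/andP: (approx n).
rewrite LS in IL1 IL2; split; lra.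
Qed.

End FaIntegral.

(** * The Markov operator *)

Section MarkovOperator.
Context {d : measure_display} {T : measurableType d} {R : realType}.
Context {p : T -> set T -> R} (tp : transition_function p).

Lemma transition01 x E : measurable E -> 0 <= p x E <= 1.
Proof. by case: tp => + _ _ _; apply. Qed.

Lemma measurable_transition E : measurable E -> measurable_fun setT (p^~ E).
Proof. by case: tp => _ _ + _; apply. Qed.

Lemma transition_set0 x : p x set0 = 0.
Proof.
have [_ _ _ sigma_add] := tp.
have := sigma_add x (fun=> set0) (fun=> measurable0) (@trivIset_set0 _ _ setT).
rewrite bigcup0 // => sums_c; set c := p x set0 in sums_c *.
have sumsS_c : (fun n => \sum_(0 <= k < n.+1) c) @ \oo --> c + c.
  under eq_fun do rewrite big_nat_recl // addrC.
  by apply: cvgD => //; exact: cvg_cst.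
have sumsS_c' : (fun n => \sum_(0 <= k < n.+1) c) @ \oo --> c.
  by rewrite (cvg_shiftS (fun n => \sum_(0 <= k < n) c)).
have cc : c = c + c by apply: cvg_unique sumsS_c' sumsS_c.
lra.
Qed.

Lemma transition_additive x : fin_additive (p x).
Proof.
move=> A B mA mB AB; have [_ _ _ sigma_add] := tp.
have mAB n : measurable (bigcup2 A B n) by case: n => [|[|n]] //=; exact: measurable0.
have := sigma_add x _ mAB; rewrite -trivIset_bigcup2 bigcup2E => /(_ AB) sums.
suff sums' : \sum_(0 <= k < n) p x (bigcup2 A B k) @[n --> \oo] --> p x A + p x B.
  exact: cvg_unique sums sums'.
apply: cvg_near_cst; exists 2%N => // n /= n2.
rewrite big_ltn ?(ltn_trans _ n2) // big_ltn //= addrA big1_seq ?addr0 // => k.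
rewrite mem_index_iota => /andP[_ /andP[k2 _]].
by case: k k2 => [|[|k]] // _; exact: transition_set0.
Qed.

Lemma markov_op_fa_prob mu : fa_prob mu -> fa_prob (markov_op p mu).
Proof.
move=> pmu; split.
- move=> A B mA mB AB; rewrite /markov_op.
  have -> : (fun x => p x (A `|` B)) = (fun x => p x A + p x B).
    by apply/funext => x; exact: transition_additive.
  apply: fa_integralD => //; try exact: measurable_transition.
  + by move=> x; case/andP: (transition01 x A mA).
  + by move=> x; case/andP: (transition01 x B mB).
  + move=> x; rewrite -transition_additive //.
    by case/andP: (transition01 x _ (measurableU _ _ mA mB)).
- by move=> A mA; case/andP: (fa_integral01 pmu _ (fun x => transition01 x A mA)).
- rewrite /markov_op; have [_ pT _ _] := tp.
  have -> : (fun x => p x setT) = (fun=> 1) by apply/funext => x; exact: pT.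
  by rewrite fa_integral_cst // lexx ler01.
Qed.

Lemma markov_op_carried mu A B : fa_prob mu -> measurable A -> measurable B ->
  mu A = 1 -> (forall x, A x -> p x B = 1) -> markov_op p mu B = 1.
Proof.
move=> pmu mA mB muA1 AB; apply/le_anti/andP; split.
  by case/andP: (fa_integral01 pmu _ (fun x => transition01 x B mB)).
rewrite /markov_op -[leLHS](_ : \sum_(b : bool) b%:R * mu (if b then A else ~` A) = 1).
  apply: (fa_integral_ge pmu _ _ _ (measurable_partition_setC _ mA)) => [x|[] x /= Ax].
  - exact: transition01.
  - by rewrite AB.
  - by case/andP: (transition01 x B mB).
by rewrite big_bool /= mul1r mul0r addr0.
Qed.

Lemma iter_markov_op_cycle m D nu n : cycle_sets p m D -> (0 < m)%N ->
  fa_prob nu -> nu (D 0%N) = 1 -> iter n (markov_op p) nu (D (n %% m)%N) = 1.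
Proof.
move=> [cD _ cyc] m_gt0 pnu nuD0; elim: n => [|n IH] /=; first by rewrite mod0n.
have mD k : measurable (D (k %% m)%N) by case: (cD _ (ltn_pmod k m_gt0)).
apply: (markov_op_carried _ _ _ _ (mD n) (mD n.+1) IH).
  by elim: n {IH} => [|n IH]; [|apply: markov_op_fa_prob].
by move=> x /(cyc _ _ (ltn_pmod n m_gt0)); rewrite -addn1 modnDml addn1.
Qed.

End MarkovOperator.

(** * The cycle of averaged iterates *)

Section ResidueAverage.
Context {d : measure_display} {T : measurableType d} {R : realType}.
Variables (p : T -> set T -> R) (L : (nat -> R) -> R) (nu : set T -> R) (m : nat).
Hypotheses (tp : transition_function p) (bL : banach_limit L) (pnu : fa_prob nu).

Definition residue_average i E :=
  L (fun j => iter (j * m + i) (markov_op p) nu E).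

Lemma fa_prob_iter_markov_op n : fa_prob (iter n (markov_op p) nu).
Proof. by elim: n => //= n IH; exact: markov_op_fa_prob. Qed.

Lemma bounded_seq_iter_markov_op (k : nat -> nat) E : measurable E ->
  bounded_seq (fun j => iter (k j) (markov_op p) nu E).
Proof.
move=> mE; apply: (bounded_seq_itv _ 0 1) => j.
by rewrite fa_prob_ge0 ?fa_prob_le1 //; exact: fa_prob_iter_markov_op.
Qed.

Lemma fa_prob_residue_average i : fa_prob (residue_average i).
Proof. by apply: fa_prob_mean bL.1 _ => j; exact: fa_prob_iter_markov_op. Qed.

Lemma markov_op_residue_average i E : measurable E ->
  markov_op p (residue_average i) E = residue_average i.+1 E.
Proof.
move=> mE; rewrite /markov_op /residue_average fa_integral_mean //.
- by congr L; apply/funext => j; rewrite addnS.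
- by case: bL.
- by move=> j; exact: fa_prob_iter_markov_op.
- exact: measurable_transition.
- by move=> x; exact: transition01.
Qed.

Lemma residue_average_period E : measurable E ->
  residue_average m E = residue_average 0 E.
Proof.
move=> mE; rewrite /residue_average.
under eq_fun do rewrite addnC -mulSn; under [in RHS]eq_fun do rewrite addn0.
exact: bL.2 _ (bounded_seq_iter_markov_op (fun j => j * m)%N E mE).
Qed.

Lemma markov_op_residue_average_mod i E : (i < m)%N -> measurable E ->
  markov_op p (residue_average i) E = residue_average (i.+1 %% m) E.
Proof.
move=> im mE; rewrite markov_op_residue_average //.
case: (ltngtP i.+1 m) => [im1|mi|->]; first by rewrite modn_small.
  by rewrite ltnS leqNgt im in mi.
by rewrite modnn residue_average_period.
Qed.

Lemma residue_average_carrier D i : cycle_sets p m D -> nu (D 0%N) = 1 ->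
  (i < m)%N -> residue_average i (D i) = 1.
Proof.
move=> cycD nuD0 im; rewrite /residue_average -(mean_cst bL.1 1); congr L.
apply/funext => j; rewrite -[in D i](modn_small im) -(modnMDl j).
by apply: (iter_markov_op_cycle tp) => //; exact: leq_ltn_trans im.
Qed.

End ResidueAverage.

Section SingularCycle.
Context {d : measure_display} {T : measurableType d} {R : realType}.
Variables (p : T -> set T -> R) (m : nat) (D : nat -> set T) (mu : nat -> set T -> R).
Hypotheses (mD : forall i, (i < m)%N -> measurable (D i))
  (disjD : forall i j, (i < m)%N -> (j < m)%N -> i != j -> D i `&` D j = set0)
  (pmu : forall i, (i < m)%N -> fa_prob (mu i))
  (mu_step : forall i E, (i < m)%N -> measurable E ->
     markov_op p (mu i) E = mu (i.+1 %% m)%N E)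
  (muD : forall i, (i < m)%N -> mu i (D i) = 1).

Lemma mu_carriers i j : (i < m)%N -> (j < m)%N ->
  mu i (D j) = if i == j then 1 else 0.
Proof.
move=> im jm; case: eqVneq => [<-|ij]; first exact: muD.
apply: fa_prob_disjoint_carrier (pmu _ im) _ _ (mD _ im) (mD _ jm) _ (muD _ im).
exact: disjD.
Qed.

Lemma singular_cycle_of_carriers :
  [/\ singular_cycle_measures p m mu, (forall i, (i < m)%N -> S_ba (mu i))
    & (forall i j, (i < m)%N -> (j < m)%N -> mu i (D j) = if i == j then 1 else 0)].
Proof.
split=> [|i im|]; last exact: mu_carriers.
  2: exact: fa_prob_S_ba (pmu _ im).
split; first split.
- by move=> i im; exact: (fa_prob_S_ba (pmu _ im)).1.
- move=> i j im jm ij /(_ (D i) (mD _ im)).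
  by rewrite !mu_carriers // eqxx eq_sym (negbTE ij) => /eqP; rewrite oner_eq0.
- by move=> i im E mE; exact: mu_step.
- move=> i j im jm ij; exists (D i), (D j).
  split; [exact: mD | exact: mD | exact: disjD | |].
  + by rewrite muD //; case: (pmu _ im).
  + by rewrite muD //; case: (pmu _ jm).
Qed.

End SingularCycle.

Theorem theorem4p5 (d : measure_display) (T : measurableType d) (R : realType)
    (p : T -> set T -> R) (m : nat) (D : nat -> set T) :
  infinite_set (@setT T) ->
  (forall x : T, measurable [set x]) ->
  transition_function p ->
  singular_cycle_sets p m D ->
  exists mu : nat -> set T -> R,
    [/\ singular_cycle_measures p m mu,
        (forall i, (i < m)%N -> S_ba (mu i))
      & (forall i j, (i < m)%N -> (j < m)%N ->
           mu i (D j) = if i == j then 1 else 0)].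
Proof.
move=> _ _ tp [cycD disjD].
have [->|m_gt0] := posnP m.
  by exists (fun _ _ => 0); split; [split; [split|]|..].
have [cD _ _] := cycD; have mD i im := (cD i im).1.
have [_ [x0 D0x0]] := cD 0%N m_gt0.
have [L bL] := banach_limit_exists R.
have pdelta := @fa_prob_indic _ T R x0.
exists (residue_average p L (fun A => \1_A x0) m).
apply: singular_cycle_of_carriers => // [i _|i E im mE|i im].
- exact: fa_prob_residue_average.
- exact: markov_op_residue_average_mod.
- by apply: residue_average_carrier => //; rewrite indicE mem_set.
Qed.
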